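(* Let $d\ge 2$ and $C_1>0$. There exist constants $C_2>1$ and $c\in(0,1)$, depending only on $d$ and $C_1$, such that the following holds for every finite field $\mathbb F_q$ of characteristic greater than two. Let $E,F\subset\mathbb F_q^d$ and $0\le\beta\le1$, and assume $\max_{x\in\mathbb F_q^d\setminus\{0\}}|E\cap l_x|\le C_1 q^{\beta}$. If $|E||F|\ge C_2\, q^{d+\beta}$, then $|\Pi(E,F)|\ge c\,q$.
   Context: $\mathbb F_q$ is a finite field with $q$ elements and characteristic greater than two; $\mathbb F_q^*=\mathbb F_q\setminus\{0\}$. For $x\in\mathbb F_q^d\setminus\{0\}$, $l_x=\{sx: s\in\mathbb F_q^*\}$. For $E,F\subset\mathbb F_q^d$, $\Pi(E,F)=\{x\cdot y: x\in E,\ y\in F\}$ with $x\cdot y=\sum_i x_iy_i$. *)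

From mathcomp Require Import all_boot all_algebra all_field.
From Stdlib Require Import Reals.
Set Implicit Arguments. Unset Strict Implicit. Unset Printing Implicit Defensive.
Import GRing.Theory.
Local Open Scope ring_scope.

Definition dotv (F : finFieldType) (d : nat) (x y : 'rV[F]_d) : F :=
  \sum_(i < d) x 0 i * y 0 i.

Definition linex (F : finFieldType) (d : nat) (x : 'rV[F]_d) : {set 'rV[F]_d} :=
  [set s *: x | s in [set s : F | s != 0]].

Definition Pi (F : finFieldType) (d : nat) (E G : {set 'rV[F]_d}) : {set F} :=
  [set dotv x y | x in E, y in G].

(* Let nu(t) = #{(x, y) in E x G | x . y = t}, N = |E||G|, and let M bound |E :&: l_z|.
   Cauchy-Schwarz over Pi(E, G) gives N^2 <= |Pi(E, G)| sum_t nu(t)^2, so it suffices to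
   show q sum_t nu(t)^2 <= N^2 + M N q^d.  With f_z(t) = #{y in G | z . y = t} and the
   dispersion D(z) = sum_t (q f_z(t) - |G|)^2, Cauchy-Schwarz over E bounds
   sum_t (q nu(t) - N)^2 by |E| sum_(x in E) D(x).  Since D is constant on each line l_z
   and every line meets E \ {0} in at most M points, (q - 1) sum_(x in E) D(x) is at most
   M sum_z D(z) = M q |G| (q - 1) q^d, the last identity because for w <> 0 all level sets
   of z |-> z . w have the same size.  Finally |E||G| >= (2 + 2 C1) q^(d + beta) forces
   M q^d < |E \ {0}||G|, hence q <= 2 |Pi(E, G)|: one may take C2 = 2 + 2 C1 and c = 1/2. *)

From mathcomp Require Import all_boot all_order all_algebra all_field.
From Stdlib Require Import Reals Lra.
From mathcomp Require Import ring.
Set Implicit Arguments. Unset Strict Implicit. Unset Printing Implicit Defensive.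
Import Order.TTheory GRing.Theory Num.Theory.
Local Open Scope ring_scope.

Section SumsOfSquares.
Variables (I : finType) (A : {pred I}).

Lemma sum_sqr_affine (R : comNzRingType) (f : I -> R) (k m : R) :
  \sum_(i in A) (k * f i - m) ^+ 2 =
  k ^+ 2 * \sum_(i in A) f i ^+ 2 - 2 * k * m * \sum_(i in A) f i + #|A|%:R * m ^+ 2.
Proof.
rewrite (eq_bigr (fun i => k ^+ 2 * f i ^+ 2 + (- (2 * k * m)) * f i + m ^+ 2));
  last by move=> i _; ring.
by rewrite !big_split /= -!mulr_sumr sumr_const -mulr_natl; ring.
Qed.

Lemma sqr_sum_le_card_sum_sqr (R : realDomainType) (f : I -> R) :
  (\sum_(i in A) f i) ^+ 2 <= #|A|%:R * \sum_(i in A) f i ^+ 2.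
Proof.
set n : R := #|A|%:R; set s := \sum_(i in A) f i.
have [n0 | n_gt0] := eqVneq n 0.
  have -> : s = 0.
    rewrite /s big1 // => i Ai.
    by move/eqP: n0; rewrite /n (cardD1 i) Ai pnatr_eq0.
  by rewrite expr0n /= n0 mul0r.
(* expanding [0 <= sum (n f_i - s)^2] gives [0 <= n (n sum f_i^2 - s^2)] *)
have : 0 <= \sum_(i in A) (n * f i - s) ^+ 2 by apply: sumr_ge0 => i _; exact: sqr_ge0.
rewrite sum_sqr_affine -/s -/n.
have -> : n ^+ 2 * \sum_(i in A) f i ^+ 2 - 2 * n * s * s + n * s ^+ 2 =
          n * (n * \sum_(i in A) f i ^+ 2 - s ^+ 2) by ring.
by rewrite pmulr_rge0 ?subr_ge0 // lt0r n_gt0 ler0n.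
Qed.

End SumsOfSquares.

Section DotProduct.
Variables (F : finFieldType) (d : nat).
Local Notation V := 'rV[F]_d.

Lemma dotvZl (s : F) (x y : V) : dotv (s *: x) y = s * dotv x y.
Proof. by rewrite /dotv mulr_sumr; apply: eq_bigr => i _; rewrite mxE mulrA. Qed.

Lemma dotvDl (x z y : V) : dotv (x + z) y = dotv x y + dotv z y.
Proof. by rewrite /dotv -big_split; apply: eq_bigr => i _; rewrite mxE mulrDl. Qed.

Lemma dotvBr (z y y' : V) : dotv z (y - y') = dotv z y - dotv z y'.
Proof. by rewrite /dotv -sumrB; apply: eq_bigr => i _; rewrite !mxE mulrBr. Qed.

Lemma dotv0r (z : V) : dotv z 0 = 0.
Proof. by rewrite /dotv big1 // => i _; rewrite mxE mulr0. Qed.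

Lemma dotv_delta (i : 'I_d) (w : V) : dotv (delta_mx 0 i) w = w 0 i.
Proof.
rewrite /dotv (bigD1 i) //= big1 ?addr0; first by rewrite mxE !eqxx mul1r.
by move=> j /negbTE ji; rewrite mxE ji andbF mul0r.
Qed.

End DotProduct.

Local Notation ind b := (b%:R : int).

Lemma sum_ind_eq (T : finType) (c : T) : \sum_(t : T) ind (c == t) = 1.
Proof.
rewrite (bigD1 c) //= big1 ?addr0 ?eqxx // => t tc.
by rewrite eq_sym (negbTE tc).
Qed.

Lemma sum_ind_eq2 (T : finType) (a b : T) :
  \sum_(t : T) ind (a == t) * ind (b == t) = ind (a == b).
Proof.
rewrite (bigD1 a) //= big1 ?addr0 ?eqxx ?mul1r 1?eq_sym // => t ta.
by rewrite eq_sym (negbTE ta) mul0r.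
Qed.

Section Hyperplanes.
Variables (F : finFieldType) (d : nat).
Local Notation V := 'rV[F]_d.
Local Notation q := (#|F|%:R : int).
Local Notation qd := (#|{: V}|%:R : int).

(* translation by multiples of some [z0] with [z0 . w = 1] permutes the level sets
   of [z |-> z . w] *)
Lemma sum_dotv_eq_const (w : V) (t : F) : w != 0 ->
  \sum_(z : V) ind (dotv z w == t) = \sum_(z : V) ind (dotv z w == 0).
Proof.
move=> w_neq0.
have [i wi_neq0] : exists i, w 0 i != 0.
  apply/existsP; apply: contraNT w_neq0; rewrite negb_exists => /forallP w0.
  by apply/eqP/rowP => j; rewrite mxE; apply/eqP/negbNE/w0.
set z0 : V := (w 0 i)^-1 *: delta_mx 0 i.
have z0w : dotv z0 w = 1 by rewrite dotvZl dotv_delta mulVf.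
rewrite (reindex_inj (addIr (t *: z0))) /=; apply: eq_bigr => z _.
by rewrite dotvDl dotvZl z0w mulr1 -{2}(add0r t) (inj_eq (addIr t)).
Qed.

Lemma sum_dotv_eq0 (w : V) :
  q * \sum_(z : V) ind (dotv z w == 0) = qd + (q - 1) * qd * ind (w == 0).
Proof.
have [-> | w_neq0] := eqVneq w 0.
  under eq_bigr => z _ do rewrite dotv0r eqxx.
  by rewrite sumr_const /= -[_ *+ _]mulr_natl; ring.
rewrite mulr0 addr0.
have -> : qd = \sum_(t : F) \sum_(z : V) ind (dotv z w == t).
  rewrite exchange_big /= (eq_bigr (fun _ => 1)) ?sumr_const // => z _.
  exact: sum_ind_eq.
by rewrite (eq_bigr _ (fun t _ => sum_dotv_eq_const t w_neq0)) sumr_const mulr_natl.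
Qed.

End Hyperplanes.

Section Dispersion.
Variables (F : finFieldType) (d : nat) (G : {set 'rV[F]_d}).
Local Notation V := 'rV[F]_d.
Local Notation q := (#|F|%:R : int).
Local Notation qd := (#|{: V}|%:R : int).
Local Notation g := (#|G|%:R : int).

Definition fiber (z : V) (t : F) : int := \sum_(y in G) ind (dotv z y == t).

Definition dispersion (z : V) : int := \sum_(t : F) (q * fiber z t - g) ^+ 2.

Lemma sum_fiber (z : V) : \sum_(t : F) fiber z t = g.
Proof.
rewrite exchange_big /= (eq_bigr (fun _ => 1)) ?sumr_const // => y _.
exact: sum_ind_eq.
Qed.

Lemma sum_fiber_sqr (z : V) : \sum_(t : F) fiber z t ^+ 2 =
  \sum_(y in G) \sum_(y' in G) ind (dotv z (y - y') == 0).
Proof.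
transitivity (\sum_(t : F) \sum_(y in G) \sum_(y' in G)
                ind (dotv z y == t) * ind (dotv z y' == t)).
  apply: eq_bigr => t _; rewrite expr2 mulr_suml; apply: eq_bigr => y _.
  exact: mulr_sumr.
rewrite exchange_big; apply: eq_bigr => y _; rewrite exchange_big.
by apply: eq_bigr => y' _; rewrite sum_ind_eq2 dotvBr subr_eq0.
Qed.

Lemma sum_sum_fiber_sqr :
  q * \sum_(z : V) \sum_(t : F) fiber z t ^+ 2 = g ^+ 2 * qd + g * (q - 1) * qd.
Proof.
under eq_bigr => z _ do rewrite sum_fiber_sqr.
rewrite exchange_big /= mulr_sumr.
rewrite (eq_bigr (fun y => g * qd + (q - 1) * qd)); last first.
  move=> y yG; rewrite exchange_big /= mulr_sumr.
  under eq_bigr => y' _ do rewrite sum_dotv_eq0.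
  rewrite big_split /= -mulr_sumr sumr_const.
  suff -> : \sum_(y' in G) ind (y - y' == 0) = 1 by ring.
  rewrite (bigD1 y) //= subrr eqxx big1 ?addr0 // => y' /andP[_ y'_neq_y].
  by rewrite subr_eq0 eq_sym (negbTE y'_neq_y).
by rewrite sumr_const; ring.
Qed.

Lemma dispersion_ge0 (z : V) : 0 <= dispersion z.
Proof. by apply: sumr_ge0 => t _; exact: sqr_ge0. Qed.

Lemma sum_dispersion : \sum_(z : V) dispersion z = q * g * (q - 1) * qd.
Proof.
have dispersionE z : dispersion z = q ^+ 2 * \sum_(t : F) fiber z t ^+ 2 - q * g ^+ 2.
  by rewrite /dispersion (sum_sqr_affine predT) sum_fiber; ring.
rewrite (eq_bigr _ (fun z _ => dispersionE z)) sumrB -mulr_sumr sumr_const.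
have -> : q ^+ 2 * \sum_(z : V) \sum_(t : F) fiber z t ^+ 2 =
          q * (q * \sum_(z : V) \sum_(t : F) fiber z t ^+ 2) by ring.
by rewrite sum_sum_fiber_sqr; ring.
Qed.

Lemma fiberZ (s : F) (z : V) (t : F) : s != 0 -> fiber (s *: z) t = fiber z (t / s).
Proof.
move=> s_neq0; apply: eq_bigr => y _.
by rewrite dotvZl (can2_eq (mulKf s_neq0) (mulVKf s_neq0)) mulrC.
Qed.

Lemma dispersionZ (s : F) (z : V) : s != 0 -> dispersion (s *: z) = dispersion z.
Proof.
move=> s_neq0; rewrite /dispersion (reindex_inj (mulfI s_neq0)) /=.
by apply: eq_bigr => t _; rewrite fiberZ // mulrAC divff // mul1r.
Qed.

End Dispersion.

Lemma sum_nonzero_const (F : finFieldType) (c : int) :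
  \sum_(s : F | s != 0) c = (#|F|%:R - 1) * c.
Proof.
have := sumr_const (@predT F) c; rewrite (bigD1 0) //= => sum_c.
by apply: (addrI c); rewrite sum_c; ring.
Qed.

Section PairCount.
Variables (F : finFieldType) (d : nat) (E G : {set 'rV[F]_d}) (M : nat).
Local Notation V := 'rV[F]_d.
Local Notation q := (#|F|%:R : int).
Local Notation qd := (#|{: V}|%:R : int).
Local Notation g := (#|G|%:R : int).
Local Notation N := (#|E|%:R * #|G|%:R : int).
Hypothesis E_no0 : 0 \notin E.
Hypothesis lineE : forall z : V, z != 0 -> (#|E :&: linex z| <= M)%nat.

Lemma line_multiplicity_le (z : V) :
  \sum_(x in E) \sum_(s : F | s != 0) ind (z == s *: x) <= M%:R.
Proof.
have [-> | z_neq0] := eqVneq z 0.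
  rewrite big1 ?ler0n // => x xE; rewrite big1 // => s s_neq0.
  rewrite eq_sym scaler_eq0 (negbTE s_neq0) /=.
  by case: eqP xE => [-> | //]; rewrite (negbTE E_no0).
apply: le_trans (_ : \sum_(x in E) ind (x \in linex z) <= _).
  apply: ler_sum => x xE.
  have x_neq0 : x != 0 by apply: contraNneq E_no0 => <-.
  case: (pickP (fun s => (s != 0) && (z == s *: x))) =>
    [s /andP[s_neq0 /eqP z_def] | no_s].
    have -> : x \in linex z.
      by apply/imsetP; exists s^-1; [rewrite inE invr_eq0 | rewrite z_def scalerK].
    rewrite (bigD1 s) //= z_def eqxx big1 ?addr0 // => s' /andP[_ s'_neq_s].
    rewrite -subr_eq0 -scalerBl scaler_eq0 subr_eq0 eq_sym.
    by rewrite (negbTE s'_neq_s) (negbTE x_neq0).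
  by rewrite big1 // => s s_neq0; move: (no_s s); rewrite s_neq0 => /= ->.
have -> : \sum_(x in E) ind (x \in linex z) = \sum_(x in E :&: linex z) 1.
  rewrite [RHS]big_mkcond [LHS]big_mkcond; apply: eq_bigr => x _.
  by rewrite inE; case: (x \in E); case: (x \in linex z).
by rewrite sumr_const ler_nat lineE.
Qed.

Lemma sum_dispersion_in_le :
  (q - 1) * \sum_(x in E) dispersion G x <= M%:R * \sum_(z : V) dispersion G z.
Proof.
have -> : (q - 1) * \sum_(x in E) dispersion G x =
    \sum_(z : V) (\sum_(x in E) \sum_(s : F | s != 0) ind (z == s *: x)) * dispersion G z.
  rewrite mulr_sumr.
  transitivity (\sum_(x in E) \sum_(s : F | s != 0) \sum_(z : V)
                  ind (z == s *: x) * dispersion G z).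
    apply: eq_bigr => x _; rewrite -sum_nonzero_const; apply: eq_bigr => s s_neq0.
    rewrite (bigD1 (s *: x)) //= eqxx mul1r big1 ?addr0 ?dispersionZ // => z z_neq.
    by rewrite (negbTE z_neq) mul0r.
  rewrite [RHS](eq_bigr (fun z => \sum_(x in E) \sum_(s : F | s != 0)
                                  ind (z == s *: x) * dispersion G z)); last first.
    by move=> z _; rewrite mulr_suml; apply: eq_bigr => x _; rewrite mulr_suml.
  by rewrite [RHS]exchange_big; apply: eq_bigr => x _; rewrite [RHS]exchange_big.
rewrite mulr_sumr; apply: ler_sum => z _.
exact (ler_wpM2r (dispersion_ge0 G z) (line_multiplicity_le z)).
Qed.

Definition pairs (t : F) : int := \sum_(x in E) fiber G x t.

Lemma sum_pairs : \sum_(t : F) pairs t = N.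
Proof.
rewrite exchange_big /= (eq_bigr (fun _ => g)) => [|x _]; last exact: sum_fiber.
by rewrite sumr_const mulr_natl.
Qed.

Lemma pairs_eq0 (t : F) : t \notin Pi E G -> pairs t = 0.
Proof.
move=> t_notin; apply: big1 => x xE; apply: big1 => y yG.
by case: eqP t_notin => // <-; rewrite imset2_f.
Qed.

Lemma pairs_deviation_le :
  \sum_(t : F) (q * pairs t - N) ^+ 2 <= #|E|%:R * \sum_(x in E) dispersion G x.
Proof.
rewrite /dispersion exchange_big /= mulr_sumr; apply: ler_sum => t _.
have -> : q * pairs t - N = \sum_(x in E) (q * fiber G x t - g).
  by rewrite sumrB -mulr_sumr sumr_const; ring.
exact: (sqr_sum_le_card_sum_sqr E).
Qed.

Lemma sum_pairs_sqr_le : q * \sum_(t : F) pairs t ^+ 2 <= N ^+ 2 + M%:R * N * qd.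
Proof.
have q_gt1 : 1 < q by rewrite ltr1n finNzRing_gt1.
have disp_E : \sum_(x in E) dispersion G x <= M%:R * q * g * qd.
  rewrite -(ler_pM2l (_ : 0 < q - 1)) ?subr_gt0 //.
  have -> : (q - 1) * (M%:R * q * g * qd) = M%:R * (q * g * (q - 1) * qd) by ring.
  by rewrite -sum_dispersion; exact: sum_dispersion_in_le.
have dev := pairs_deviation_le; rewrite (sum_sqr_affine predT) sum_pairs in dev.
rewrite -(ler_pM2l (lt_trans ltr01 q_gt1)) mulrDr.
apply: le_trans (_ : q * N ^+ 2 + #|E|%:R * \sum_(x in E) dispersion G x <= _).
  rewrite -lerBlDl; apply: le_trans _ dev; rewrite le_eqVlt; apply/predU1P; left; ring.
rewrite lerD2l; apply: le_trans (_ : #|E|%:R * (M%:R * q * g * qd) <= _).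
  exact: ler_wpM2l.
by rewrite le_eqVlt; apply/predU1P; left; ring.
Qed.

Lemma card_Pi_mul_ge :
  (#|F| * (#|E| * #|G|) <= #|Pi E G| * (#|E| * #|G| + M * #|{: V}|))%nat.
Proof.
have [-> | N_gt0] := posnP (#|E| * #|G|); first by rewrite muln0.
have sqrN_le : N ^+ 2 <= #|Pi E G|%:R * \sum_(t : F) pairs t ^+ 2.
  rewrite -sum_pairs (bigID (mem (Pi E G))) /= [X in _ + X]big1 ?addr0;
    last by move=> t /pairs_eq0.
  apply: le_trans (sqr_sum_le_card_sum_sqr _ _) _; apply: ler_wpM2l => //.
  rewrite [leRHS](bigID (mem (Pi E G))) /= lerDl.
  by apply: sumr_ge0 => t _; exact: sqr_ge0.
rewrite -(@ler_nat int) !natrM natrD -(ler_pM2r (_ : 0 < N)); last by rewrite -natrM ltr0n.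
apply: le_trans (_ : q * (#|Pi E G|%:R * \sum_(t : F) pairs t ^+ 2) <= _).
  by rewrite -mulrA -expr2; exact: ler_wpM2l.
rewrite [leLHS]mulrCA [leRHS]mulrC [leRHS]mulrCA.
apply: ler_wpM2l => //; apply: le_trans sum_pairs_sqr_le _.
by rewrite le_eqVlt; apply/predU1P; left; ring.
Qed.

End PairCount.

Lemma card_Pi_ge_half (F : finFieldType) (d : nat) (E G : {set 'rV[F]_d}) (M : nat) :
    (forall z : 'rV[F]_d, z != 0 -> (#|E :&: linex z| <= M)%nat) ->
    (M * #|{: 'rV[F]_d}| < #|E|.-1 * #|G|)%nat ->
  (#|F| <= 2 * #|Pi E G|)%nat.
Proof.
move=> lineE lines_lt.
set E' := E :\ 0; set N := (#|E'| * #|G|)%nat.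
have lineE' z : z != 0 -> (#|E' :&: linex z| <= M)%nat.
  move=> z_neq0; apply: leq_trans (lineE z z_neq0).
  by rewrite subset_leq_card ?setSI ?subD1set.
have := @card_Pi_mul_ge _ _ E' G M (negbT (setD11 0 E)) lineE'; rewrite -/N => Pi'_ge.
have Pi_ge : (#|Pi E' G| <= #|Pi E G|)%nat by rewrite subset_leq_card ?imset2S ?subD1set.
have {}lines_lt : (M * #|{: 'rV[F]_d}| < N)%nat.
  apply: leq_trans lines_lt _; rewrite leq_mul2r (cardsD1 0 E).
  by case: (0 \in E); rewrite ?leqnn ?leq_pred orbT.
have N_gt0 : (0 < N)%nat by apply: leq_ltn_trans lines_lt.
rewrite -(leq_pmul2r N_gt0); apply: leq_trans Pi'_ge _.
apply: leq_trans (_ : #|Pi E G| * (N + N) <= _)%nat.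
  by rewrite leq_mul // leq_add2l ltnW.
by rewrite addnn -mul2n mulnCA mulnA.
Qed.

Local Close Scope ring_scope.

Lemma INR_expn (m n : nat) : INR (expn m n) = (INR m ^ n)%R.
Proof. by elim: n => [|n IHn] //; rewrite expnS mult_INR IHn. Qed.

Lemma lines_lt_pairs (C1 X Y m e e' g : R) :
  (0 < C1 -> 0 < X -> 1 <= Y -> m <= C1 * Y -> 0 <= g <= X -> e <= e' + 1 ->
   (2 + 2 * C1) * (X * Y) <= e * g -> m * X < e' * g)%R.
Proof.
move=> C1_gt0 X_gt0 Y_ge1 m_le [g_ge0 g_le] e_le eg_ge.
have : (0 <= (e' + 1 - e) * g)%R by apply: Rmult_le_pos; lra.
have : (0 <= (C1 * Y - m) * X)%R by apply: Rmult_le_pos; lra.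
have : (0 <= (Y - 1) * X)%R by apply: Rmult_le_pos; lra.
have : (0 < C1 * (X * Y))%R by apply: Rmult_lt_0_compat; nra.
lra.
Qed.

Lemma card_Pi_ge_half_of_power_bounds (F : finFieldType) (d : nat)
    (E G : {set 'rV[F]_d}) (C1 beta : R) :
    (0 < C1)%R -> (0 <= beta)%R ->
    (forall x : 'rV[F]_d, x != GRing.zero ->
       (INR #|E :&: linex x| <= C1 * Rpower (INR #|F|) beta)%R) ->
    ((2 + 2 * C1) * Rpower (INR #|F|) (INR d + beta) <= INR #|E| * INR #|G|)%R ->
  (INR #|F| <= 2 * INR #|Pi E G|)%R.
Proof.
move=> C1_gt0 beta_ge0 lineE cardEG.
set q := INR #|F| in lineE cardEG *.
have q_ge1 : (1 <= q)%R by apply/(le_INR 1)/ssrnat.leP/ltnW/finNzRing_gt1.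
set M := \max_(z | z != GRing.zero) #|E :&: linex z|.
have lineM z : z != GRing.zero -> (#|E :&: linex z| <= M)%nat.
  exact: (@leq_bigmax_cond _ (fun z => z != GRing.zero) (fun z => #|E :&: linex z|)).
have Y_ge1 : (1 <= Rpower q beta)%R by rewrite -(Rpower_O q); [apply: Rle_Rpower | lra].
have M_le : (INR M <= C1 * Rpower q beta)%R.
  apply: (big_ind (fun m => INR m <= C1 * Rpower q beta)%R) => [/=|m1 m2|z /lineE] //.
  - by apply: Rmult_le_pos; lra.
  - by rewrite /maxn; case: ltnP.
have G_le : (INR #|G| <= q ^ d)%R.
  by rewrite -INR_expn; apply/le_INR/ssrnat.leP; have := max_card G; rewrite card_mx mul1n.
have E_le : (INR #|E| <= INR #|E|.-1 + 1)%R.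
  by rewrite -S_INR; apply/le_INR/ssrnat.leP; exact: leqSpred.
have lines_lt : (M * #|{: 'rV[F]_d}| < #|E|.-1 * #|G|)%nat.
  apply/ssrnat.ltP/INR_lt; rewrite !mult_INR card_mx mul1n INR_expn.
  apply: (lines_lt_pairs C1_gt0 (pow_lt _ _ _) Y_ge1 M_le (conj (pos_INR _) G_le) E_le).
    lra.
  by rewrite Rpower_plus Rpower_pow in cardEG; lra.
have : (q <= INR 2 * INR #|Pi E G|)%R.
  by rewrite -mult_INR; apply/le_INR/ssrnat.leP/(card_Pi_ge_half lineM).
by rewrite [INR 2]/=; lra.
Qed.

Theorem lemma2p3 :
  forall (d : nat) (C1 : R), (2 <= d)%N -> (0 < C1)%R ->
  exists (C2 c : R), (1 < C2)%R /\ (0 < c < 1)%R /\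
    forall (F : finFieldType),
      (forall p : nat, p \in GRing.pchar F -> (2 < p)%N) ->
      forall (E G : {set 'rV[F]_d}) (beta : R),
        (0 <= beta <= 1)%R ->
        (forall x : 'rV[F]_d, x != GRing.zero ->
           (INR #|E :&: linex x| <= C1 * Rpower (INR #|F|) beta)%R) ->
        (INR #|E| * INR #|G| >= C2 * Rpower (INR #|F|) (INR d + beta))%R ->
        (INR #|Pi E G| >= c * INR #|F|)%R.
Proof.
move=> d C1 _ C1_gt0; exists (2 + 2 * C1)%R, (/ 2)%R; split; [lra | split; [lra |]].
move=> F _ E G beta [beta_ge0 _] lineE /Rge_le cardEG.
have := card_Pi_ge_half_of_power_bounds C1_gt0 beta_ge0 lineE cardEG; lra.
Qed.
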